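(* For $1\le k\le m<2n$, $\sigma_k^m:=p(v(k,m),v(k,m))$ equals $q^2$ if $m=\phi(k)$, and equals $q$ otherwise.
   Context: Let $\mathbf{k}$ be a field, $G$ an abelian group, $n\ge2$, $g_1,\dots,g_n\in G$, characters $\chi^1,\dots,\chi^n:G\to\mathbf{k}^*$, $p_{ij}=\chi^i(g_j)$. Fix $q\in\mathbf{k}^*$ and assume $p_{ii}=q$ ($1\le i<n$), $p_{nn}=q^2$, $p_{i,i-1}p_{i-1,i}=q^{-1}$ ($1<i<n$), $p_{n-1,n}p_{n,n-1}=q^{-2}$, $p_{ij}p_{ji}=1$ ($j>i+1$). For words $u,v$ in $x_1,\dots,x_n$, $p(u,v)=\chi^u(g_v)$, where $g_v$ (resp. $\chi^u$) is obtained by replacing each $x_i$ by $g_i$ (resp. $\chi^i$); $p$ is bimultiplicative. For $n<i<2n$, $x_i:=x_{2n-i}$; $\phi(i)=2n-i$; $v(k,m)$ is the word $x_kx_{k+1}\cdots x_m$. *)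

From mathcomp Require Import all_boot all_order all_algebra.
Set Implicit Arguments. Unset Strict Implicit. Unset Printing Implicit Defensive.
Import GRing.Theory.
Local Open Scope ring_scope.

(* The abelian group G is written additively (a zmodType); letters x_1..x_n
   are encoded by their indices (nat); a word is a seq nat. *)

Definition xidx (n i : nat) : nat := if (i <= n)%N then i else (2 * n - i)%N.

Definition phi (n i : nat) : nat := (2 * n - i)%N.

Definition vword (n k m : nat) : seq nat := [seq xidx n i | i <- iota k (m - k).+1].

Definition gword (G : zmodType) (g : nat -> G) (w : seq nat) : G := \sum_(a <- w) g a.

Definition chiword (K : fieldType) (G : zmodType) (chi : nat -> G -> K)
  (u : seq nat) (x : G) : K := \prod_(a <- u) chi a x.

Definition pw (K : fieldType) (G : zmodType) (chi : nat -> G -> K) (g : nat -> G)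
  (u v : seq nat) : K := chiword chi u (gword g v).

Definition pij (K : fieldType) (G : zmodType) (chi : nat -> G -> K) (g : nat -> G)
  (i j : nat) : K := chi i (g j).

Definition is_character (K : fieldType) (G : zmodType) (c : G -> K) : Prop :=
  (forall a b : G, c (a + b) = c a * c b) /\ (forall a : G, c a != 0).

From mathcomp Require Import all_boot all_order all_algebra.
From mathcomp Require Import ring zify.
Import GRing.Theory.
Local Open Scope ring_scope.

(* Since p is bimultiplicative, appending a letter y to a word w gives
   p(wy, wy) = p(w, w) p_yy prod_(a in w) p_ay p_ya.  Appending y = x_(m+1)
   to v(k, m), only the letters of v(k, m) equal or adjacent to y contribute
   to the product, and the whole factor is q, q^-1 or 1 according as
   m + 1 = phi(k), m = phi(k), or neither.  Induction on m then gives the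
   claim from the one-letter words, where p_(x_k x_k) is q^2 only for k = n. *)

Lemma character0 {K : fieldType} {G : zmodType} {c : G -> K} :
  is_character c -> c 0 = 1.
Proof. by move=> [cD c_neq0]; apply: (mulfI (c_neq0 0)); rewrite mulr1 -cD addr0. Qed.

Section Bimultiplicativity.

Context {K : fieldType} {G : zmodType}.
Variables (chi : nat -> G -> K) (g : nat -> G).

Definition braid (a b : nat) : K := pij chi g a b * pij chi g b a.

Lemma braidC a b : braid a b = braid b a.
Proof. exact: mulrC. Qed.

Variable letter : pred nat.
Hypothesis chi_char : forall i, letter i -> is_character (chi i).

Lemma character_gword i w : letter i ->
  chi i (gword g w) = \prod_(a <- w) pij chi g i a.
Proof.
by move=> /chi_char chi_i; rewrite /gword (big_morph _ chi_i.1 (character0 chi_i)).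
Qed.

Lemma pw_catl u u' v : pw chi g (u ++ u') v = pw chi g u v * pw chi g u' v.
Proof. by rewrite /pw /chiword big_cat. Qed.

Lemma pw_catr u v v' : all letter u ->
  pw chi g u (v ++ v') = pw chi g u v * pw chi g u v'.
Proof.
move=> /allP u_letters; rewrite /pw /chiword -big_split /= !big_seq.
by apply: eq_bigr => a /u_letters /chi_char [chiD _]; rewrite /gword big_cat chiD.
Qed.

Lemma pw_rcons u y : all letter u -> letter y ->
  pw chi g (rcons u y) (rcons u y) =
  pw chi g u u * pij chi g y y * \prod_(a <- u) braid a y.
Proof.
move=> u_letters y_letter; rewrite -cats1 pw_catl !pw_catr //= ?y_letter //.
rewrite /braid big_split /= {2 3 4}/pw /chiword /gword !big_seq1.
by rewrite character_gword // /pij; ring.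
Qed.

End Bimultiplicativity.

Lemma xidx_small {n i : nat} : (i <= n)%N -> xidx n i = i.
Proof. by rewrite /xidx => ->. Qed.

Lemma xidx_large {n i : nat} : (n < i)%N -> xidx n i = (2 * n - i)%N.
Proof. by rewrite /xidx ltnNge => /negbTE ->. Qed.

Lemma xidx_range {n i : nat} : (1 <= i < 2 * n)%N -> (1 <= xidx n i <= n)%N.
Proof. by rewrite /xidx; case: ifP; lia. Qed.

Lemma vword_diag n k : vword n k k = [:: xidx n k].
Proof. by rewrite /vword subnn. Qed.

Lemma vword_rcons n k m : (k <= m)%N ->
  vword n k m.+1 = rcons (vword n k m) (xidx n m.+1).
Proof.
move=> le_km; rewrite /vword -map_rcons -cats1 subSn // -addn1 iotaD.
by rewrite addnS subnKC.
Qed.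

Lemma big_vword (R : Type) (idx : R) (op : R -> R -> R) (F : nat -> R) n k m :
  (k <= m)%N ->
  \big[op/idx]_(a <- vword n k m) F a = \big[op/idx]_(k <= i < m.+1) F (xidx n i).
Proof. by move=> le_km; rewrite big_map /index_iota subSn. Qed.

Lemma vword_letters n k m : (1 <= k <= m)%N -> (m < 2 * n)%N ->
  all (fun a => 1 <= a <= n)%N (vword n k m).
Proof.
move=> k_range lt_m2n; apply/allP => _ /mapP [i + ->]; rewrite mem_iota => i_range.
by apply: xidx_range; lia.
Qed.

Section VwordBraiding.

Variables (K : fieldType) (G : zmodType) (n : nat) (g : nat -> G)
  (chi : nat -> G -> K) (q : K).
Hypotheses (n_ge2 : (2 <= n)%N)
  (chi_char : forall i, (1 <= i <= n)%N -> is_character (chi i))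
  (q_neq0 : q != 0)
  (p_diag : forall i, (1 <= i < n)%N -> pij chi g i i = q)
  (p_top : pij chi g n n = q ^+ 2)
  (p_adj : forall i, (1 < i < n)%N -> pij chi g i i.-1 * pij chi g i.-1 i = q^-1)
  (p_adj_top : pij chi g n.-1 n * pij chi g n n.-1 = q ^- 2)
  (p_far : forall i j, (1 <= i)%N -> (i.+1 < j)%N -> (j <= n)%N ->
     pij chi g i j * pij chi g j i = 1).

Local Notation p := (pij chi g).
Local Notation braid := (braid chi g).

Lemma braid_far a b : (1 <= a)%N -> (a.+1 < b <= n)%N -> braid a b = 1.
Proof. by move=> a_ge1 /andP[lt_ab le_bn]; apply: p_far. Qed.

Lemma braid_adj a : (1 <= a)%N -> (a.+1 < n)%N -> braid a a.+1 = q^-1.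
Proof. by move=> a_ge1 lt_an; rewrite braidC; apply: (p_adj a.+1); lia. Qed.

Lemma braid_adj_top : braid n.-1 n = q ^- 2.
Proof. exact: p_adj_top. Qed.

Lemma braid_diag a : (1 <= a < n)%N -> braid a a = q ^+ 2.
Proof. by move=> a_range; rewrite /braid p_diag. Qed.

(* Also for y + 1 = n, where p_nn = q^2 meets the braiding q^-2. *)
Lemma pdiag_braid_left y : (1 <= y)%N -> (y < n)%N ->
  p y.+1 y.+1 * braid y y.+1 = 1.
Proof.
move=> y_ge1 lt_yn; have [lt_y1n | ge_y1n] := ltnP y.+1 n.
  by rewrite p_diag ?braid_adj ?mulfV.
have -> : y = n.-1 by lia.
rewrite prednK; last by lia.
by rewrite p_top braid_adj_top mulfV ?expf_neq0.
Qed.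

Lemma pdiag_braid_right y : (1 <= y)%N -> (y.+1 < n)%N -> p y y * braid y.+1 y = 1.
Proof. by move=> y_ge1 lt_yn; rewrite braidC p_diag ?braid_adj ?mulfV //; lia. Qed.

Lemma prod_braid1 (F : nat -> nat) y a b :
  (forall i, (a <= i < b)%N -> braid (F i) y = 1) ->
  \prod_(a <= i < b) braid (F i) y = 1.
Proof. by move=> F1; rewrite big_nat big1. Qed.

Lemma prod_braid_low k m : (1 <= k <= m)%N -> (m.+1 <= n)%N ->
  \prod_(k <= i < m.+1) braid (xidx n i) m.+1 = braid m m.+1.
Proof.
move=> k_range le_mn; rewrite big_nat_recr /=; last by lia.
rewrite (xidx_small (ltnW le_mn)) prod_braid1 ?mul1r // => i i_range.
by rewrite xidx_small ?braid_far //; lia.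
Qed.

Lemma prod_braid_below k y : (1 <= k <= y)%N -> (y < n)%N ->
  \prod_(k <= i < y.+1) braid i y = if k == y then q ^+ 2 else q.
Proof.
move=> k_range lt_yn; rewrite big_nat_recr /=; last by lia.
rewrite braid_diag; last by lia.
case: eqP => [-> | ne_ky]; first by rewrite big_geq ?mul1r.
case: y => [|y] in k_range lt_yn ne_ky *; first by lia.
rewrite big_nat_recr /=; last by lia.
rewrite prod_braid1 ?mul1r; last by move=> i i_range; rewrite braid_far //; lia.
by rewrite braid_adj ?expr2 ?mulKf //; lia.
Qed.

Lemma prod_braid_head k y : (1 <= k <= y.+1)%N -> (1 <= y < n)%N ->
  \prod_(k <= i < n.+1) braid i y =
  braid y.+1 y * (if k == y.+1 then 1 else if k == y then q ^+ 2 else q).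
Proof.
move=> k_range y_range; rewrite (big_cat_nat (n := y.+2)) /=; [|lia|lia].
rewrite (@prod_braid1 _ y y.+2); last first.
  by move=> i i_range; rewrite braidC braid_far //; lia.
rewrite mulr1 big_nat_recr /=; last by lia.
case: eqP => [-> | ne_k]; first by rewrite big_geq // mul1r mulr1.
by rewrite mulrC prod_braid_below //; lia.
Qed.

(* Positions n+1, ..., m of v(k, m) carry x_(n-1), ..., x_(2n-m); of these
   only the last is adjacent to x_(2n-m-1). *)
Lemma prod_braid_reflected k m : (n < k <= m.+1)%N -> (m.+1 < 2 * n)%N ->
  \prod_(k <= i < m.+1) braid (xidx n i) (2 * n - m.+1)%N
  = if k == m.+1 then 1 else q^-1.
Proof.
move=> k_range lt_m2n; case: eqP => [-> | ne_km]; first by rewrite big_geq.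
rewrite big_nat_recr /=; last by lia.
rewrite prod_braid1 ?mul1r; last first.
  by move=> i i_range; rewrite braidC xidx_large ?braid_far //; lia.
rewrite braidC xidx_large; last by lia.
have -> : (2 * n - m = (2 * n - m.+1).+1)%N by lia.
by rewrite braid_adj //; lia.
Qed.

Lemma prod_braid_mid k m : (1 <= k <= n)%N -> (n <= m)%N -> (m.+1 < 2 * n)%N ->
  p (2 * n - m.+1)%N (2 * n - m.+1)%N *
    \prod_(k <= i < m.+1) braid (xidx n i) (2 * n - m.+1)%N =
  if (k == 2 * n - m.+1)%N then q else if (k == (2 * n - m.+1).+1)%N then q^-1 else 1.
Proof.
move=> k_range le_nm lt_m2n.
have := prod_braid_reflected n.+1 m; rewrite eqSS => tail.
move def_y: (2 * n - m.+1)%N tail => y tail.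
have y_range : (1 <= y < n)%N by lia.
rewrite p_diag // (big_cat_nat (n := n.+1)) /=; [|lia|lia].
rewrite tail; [|lia|lia].
have -> : \prod_(k <= i < n.+1) braid (xidx n i) y = \prod_(k <= i < n.+1) braid i y.
  by apply: eq_big_nat => i i_range; rewrite xidx_small //; lia.
have [le_ky1 | gt_ky1] := leqP k y.+1; last first.
  rewrite prod_braid1; last by move=> i i_range; rewrite braidC braid_far //; lia.
  have -> : (n == m) = false by lia.
  have -> : (k == y) = false by lia.
  have -> : (k == y.+1) = false by lia.
  by rewrite mul1r mulfV.
(* Either y + 1 = n and the reflected tail is empty, or both factors are q^-1. *)
have braid_tail : braid y.+1 y * (if n == m then 1 else q^-1) = q ^- 2.
  case: eqP => [eq_nm | ne_nm].
    have -> : y = n.-1 by lia.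
    by rewrite braidC prednK ?braid_adj_top ?mulr1 //; lia.
  by rewrite braidC braid_adj ?expr2 ?invfM //; lia.
have k_range' : (1 <= k <= y.+1)%N by lia.
rewrite prod_braid_head // mulrAC braid_tail.
case: (ltngtP k y) => [lt_ky | gt_ky | ->].
- have -> : (k == y.+1) = false by lia.
  by field.
- have -> : k = y.+1 by lia.
  by rewrite eqxx; field.
- by rewrite (ltn_eqF (ltnSn y)); field.
Qed.

Local Notation sigma_val k m := (if m == phi n k then q ^+ 2 else q).

Lemma sigma_val_succ k m :
  sigma_val k m * (if m.+1 == phi n k then q else if m == phi n k then q^-1 else 1)
  = sigma_val k m.+1.
Proof.
have [-> | ne_m] := eqVneq m (phi n k).
  by rewrite (gtn_eqF (ltnSn _)) expr2 mulfK.
by case: eqP => _; rewrite ?expr2 ?mulr1.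
Qed.

Lemma sigma_step_factor k m : (1 <= k <= m)%N -> (m.+1 < 2 * n)%N ->
  p (xidx n m.+1) (xidx n m.+1) *
    \prod_(k <= i < m.+1) braid (xidx n i) (xidx n m.+1) =
  if m.+1 == phi n k then q else if m == phi n k then q^-1 else 1.
Proof.
move=> k_range lt_m2n; rewrite /phi.
have [le_mn | lt_nm] := leqP m.+1 n.
  have -> : ((m.+1 == 2 * n - k)%N = false) by lia.
  have -> : ((m == 2 * n - k)%N = false) by lia.
  rewrite xidx_small // prod_braid_low //.
  by apply: pdiag_braid_left; lia.
rewrite xidx_large //.
have [lt_nk | le_kn] := ltnP n k.
  have -> : ((m.+1 == 2 * n - k)%N = false) by lia.
  have -> : ((m == 2 * n - k)%N = false) by lia.
  rewrite prod_braid_reflected; [|lia|lia].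
  have -> : (k == m.+1) = false by lia.
  by rewrite p_diag ?mulfV //; lia.
rewrite prod_braid_mid //; [|lia].
have -> : (k == 2 * n - m.+1)%N = (m.+1 == 2 * n - k)%N by lia.
by have -> : (k == (2 * n - m.+1).+1)%N = (m == 2 * n - k)%N by lia.
Qed.

Lemma sigma_vword_diag k : (1 <= k < 2 * n)%N ->
  pw chi g (vword n k k) (vword n k k) = sigma_val k k.
Proof.
move=> k_range; rewrite vword_diag /pw /chiword /gword !big_seq1.
rewrite -/(pij chi g _ _) /phi.
case: (ltngtP k n) => [lt_kn | gt_kn | ->].
- have -> : ((k == 2 * n - k)%N = false) by lia.
  by rewrite xidx_small ?p_diag //; lia.
- have -> : ((k == 2 * n - k)%N = false) by lia.
  by rewrite xidx_large ?p_diag //; lia.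
- have -> : ((n == 2 * n - n)%N = true) by lia.
  by rewrite xidx_small.
Qed.

Lemma sigma_vword k m : (1 <= k <= m)%N -> (m < 2 * n)%N ->
  pw chi g (vword n k m) (vword n k m) = sigma_val k m.
Proof.
elim: m => [|m IH] k_range lt_m2n; first by lia.
have [-> | ne_km] := eqVneq k m.+1; first exact: sigma_vword_diag.
have le_km : (k <= m)%N by lia.
have km_range : (1 <= k <= m)%N by lia.
have lt_m2n' : (m < 2 * n)%N by lia.
rewrite vword_rcons // (pw_rcons chi g _ chi_char) ?vword_letters ?xidx_range //.
by rewrite big_vword // -mulrA sigma_step_factor // IH // sigma_val_succ.
Qed.

End VwordBraiding.

Theorem lemma3p3 (K : fieldType) (G : zmodType) (n : nat) (g : nat -> G)
  (chi : nat -> G -> K) (q : K) :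
  (2 <= n)%N ->
  (forall i, (1 <= i <= n)%N -> is_character (chi i)) ->
  q != 0 ->
  (forall i, (1 <= i < n)%N -> pij chi g i i = q) ->
  pij chi g n n = q ^+ 2 ->
  (forall i, (1 < i < n)%N -> pij chi g i i.-1 * pij chi g i.-1 i = q^-1) ->
  pij chi g n.-1 n * pij chi g n n.-1 = q ^- 2 ->
  (forall i j, (1 <= i)%N -> (i.+1 < j)%N -> (j <= n)%N ->
     pij chi g i j * pij chi g j i = 1) ->
  forall k m, (1 <= k)%N -> (k <= m)%N -> (m < 2 * n)%N ->
    pw chi g (vword n k m) (vword n k m) = (if m == phi n k then q ^+ 2 else q).
Proof.
move=> n_ge2 chi_char q_neq0 p_diag p_top p_adj p_adj_top p_far k m k_ge1 le_km.
by apply: sigma_vword => //; apply/andP.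
Qed.
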